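(* Let $0<p<1$ and let $P_1,\ldots,P_n,Q\in\mathbb{R}^n$ with $P_1,\ldots,P_n$ linearly independent. If $M\in p\text{-conv}\{P_1,\ldots,P_n,Q,0\}$, then there exist $P_{i_1},\ldots,P_{i_n}\in\{P_1,\ldots,P_n,Q\}$ such that $M\in p\text{-conv}\{P_{i_1},\ldots,P_{i_n},0\}$.
   Context: Let $0<p<1$. A set $B\subseteq \mathbb{R}^n$ is called $p$-convex if $\lambda x+\mu y\in B$ whenever $x,y\in B$ and $\lambda,\mu\ge 0$ with $\lambda^p+\mu^p=1$. For $A\subseteq \mathbb{R}^n$, the $p$-convex hull $p\text{-conv}(A)$ is the intersection of all $p$-convex subsets of $\mathbb{R}^n$ containing $A$. *)

From HB Require Import structures.
From mathcomp Require Import all_boot all_order all_algebra.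
From mathcomp Require Import all_classical all_reals all_analysis.
Set Implicit Arguments. Unset Strict Implicit. Unset Printing Implicit Defensive.
Import Order.TTheory GRing.Theory Num.Theory.
Local Open Scope classical_set_scope.
Local Open Scope ring_scope.

Definition pconvex (R : realType) (n : nat) (p : R) (B : set 'rV[R]_n) : Prop :=
  forall (x y : 'rV[R]_n) (l m : R), B x -> B y -> 0 <= l -> 0 <= m ->
    l `^ p + m `^ p = 1 -> B (l *: x + m *: y).

Definition pconv (R : realType) (n : nat) (p : R) (A : set 'rV[R]_n) : set 'rV[R]_n :=
  [set x | forall B : set 'rV[R]_n, pconvex p B -> A `<=` B -> B x].

From HB Require Import structures.
From mathcomp Require Import all_boot all_order all_algebra.
From mathcomp Require Import all_classical all_reals all_analysis.
From mathcomp Require Import ring lra.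
Import Order.TTheory GRing.Theory Num.Theory.
Local Open Scope classical_set_scope.
Local Open Scope ring_scope.

(* The combinations [\sum_o w o *: x_o] with [w >= 0] and [\sum_o w o `^ p <= 1]
   form a p-convex set (by subadditivity of [t `^ p]), so [M] is such a
   combination of [P_1, ..., P_n, Q].  Writing [Q = \sum_i c_i *: P_i] yields a
   line [w + t d] of such representations of [M].  Along it [\sum_o (w o) `^ p]
   is concave in [t], so at one of the two points where the line leaves the
   nonnegative orthant it is at most its value at [t = 0].  There one weight
   vanishes, and every p-convex set containing [0] and the other [n] points
   contains such a sub-p-combination of them. *)

Lemma big_option {T : nmodType} {I : finType} (F : option I -> T) :
  \sum_(o : option I) F o = F None + \sum_(i : I) F (Some i).
Proof.
rewrite (bigD1 None) //=; congr (_ + _).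
rewrite (reindex_omap Some id) //=; last by case.
by apply: eq_bigl => i; rewrite eqxx.
Qed.

Definition skip {I : eqType} (k : option I) (i : I) : option I :=
  if k is Some j then (if i == j then None else Some i) else Some i.

Lemma skip_inj (I : eqType) (k : option I) : injective (skip k).
Proof.
case: k => [j|] i i' /=; last by case.
by case: eqVneq => [->|_]; case: eqVneq => [->|_] // [].
Qed.

Lemma big_skip {T : nmodType} {I : finType} (F : option I -> T) (k : option I) :
  F k = 0 -> \sum_(o : option I) F o = \sum_(i : I) F (skip k i).
Proof.
rewrite big_option; case: k => [j|] /= Fk0; last by rewrite Fk0 add0r.
rewrite (bigD1 j) //= [in RHS](bigD1 j) //= eqxx Fk0 add0r.
by congr (_ + _); apply: eq_bigr => i /negbTE ->.
Qed.

Section powR_facts.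
Context {R : realType}.
Implicit Types (p s x y : R).

Lemma ler_powRl p x y : 0 <= p -> 0 <= x -> x <= y -> x `^ p <= y `^ p.
Proof.
move=> p0 x0 xy; apply: ge0_ler_powR; rewrite ?nnegrE //.
exact: le_trans xy.
Qed.

Lemma powR_div p x y : 0 <= x -> 0 < y -> (x / y) `^ p = x `^ p / y `^ p.
Proof.
move=> x0 y0; apply: (mulIf (lt0r_neq0 (powR_gt0 p y0))).
by rewrite -powRM ?divr_ge0 ?(ltW y0) // !divfK ?lt0r_neq0 ?powR_gt0.
Qed.

Lemma powRVK p s : p != 0 -> 0 <= s -> (s `^ p^-1) `^ p = s.
Proof. by move=> p0 s0; rewrite -powRrM mulVf ?powRr1. Qed.

Lemma powRKV p s : p != 0 -> 0 <= s -> (s `^ p) `^ p^-1 = s.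
Proof. by move=> p0 s0; rewrite -powRrM mulfV ?powRr1. Qed.

End powR_facts.

Section powR_sub1.
Context {R : realType} {p : R}.
Hypotheses (p_gt0 : 0 < p) (p_lt1 : p < 1).
Implicit Types (a b s t u v x : R).

Let p_neq0 : p != 0. Proof. exact: lt0r_neq0. Qed.

Lemma powR0p : 0 `^ p = 0 :> R.
Proof. exact: powR0. Qed.

Lemma powR_le1 x : 0 <= x -> (x `^ p <= 1) = (x <= 1).
Proof.
move=> x0; have one_p : 1 `^ p = 1 :> R by rewrite powR1.
rewrite -{1}one_p; apply/idP/idP => [|x1]; last first.
  by apply: ler_powRl; rewrite // ltW.
apply: contraTT; rewrite -!ltNge => x1.
by apply: gt0_ltr_powR; rewrite ?nnegrE // ltW.
Qed.

Lemma mulr_powR_le t s : 0 <= t <= 1 -> 0 <= s -> t * s `^ p <= (t * s) `^ p.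
Proof.
case/andP=> t0 t1 s0; rewrite powRM // ler_wpM2r ?powR_ge0 //.
have [->|tn0] := eqVneq t 0; first by rewrite powR0p.
by apply: ger1_powR; [rewrite lt0r tn0 t0 | exact: ltW].
Qed.

Lemma powR_subadd u v : 0 <= u -> 0 <= v -> (u + v) `^ p <= u `^ p + v `^ p.
Proof.
move=> u0 v0; have [s0|sn0] := eqVneq (u + v) 0.
  by rewrite s0 powR0p addr_ge0 ?powR_ge0.
set s := u + v in sn0 *; have s_gt0 : 0 < s by rewrite lt0r sn0 addr_ge0.
set t := u / s.
have t01 : 0 <= t <= 1.
  by rewrite divr_ge0 ?(ltW s_gt0) //= ler_pdivrMr // mul1r lerDl.
have t'01 : 0 <= 1 - t <= 1 by case/andP: t01 => t0 t1; rewrite subr_ge0 t1 gerBl.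
have <- : t * s = u by rewrite divfK.
have <- : (1 - t) * s = v by rewrite mulrBl mul1r divfK // addrC addKr.
rewrite -[leLHS]mul1r -{1}(subrKC t 1) mulrDl.
by apply: lerD; apply: mulr_powR_le => //; exact: ltW.
Qed.

Lemma powR_comb a b u v : 0 <= a -> 0 <= b -> 0 <= u -> 0 <= v ->
  (a * u + b * v) `^ p <= a `^ p * u `^ p + b `^ p * v `^ p.
Proof.
move=> a0 b0 u0 v0; rewrite -(powRM _ a0 u0) -(powRM _ b0 v0).
by apply: powR_subadd; apply: mulr_ge0.
Qed.

Lemma powR_concave t u v : 0 <= t <= 1 -> 0 <= u -> 0 <= v ->
  t * u `^ p + (1 - t) * v `^ p <= (t * u + (1 - t) * v) `^ p.
Proof.
case/andP=> t0 t1 u0 v0.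
have p1 : 1 <= p^-1 by rewrite invf_ge1 // ltW.
have := @convex_powR R p^-1 p1 (Itv01 t0 t1) (u `^ p) (v `^ p).
rewrite !inE /= !in_itv /= !powR_ge0 => /(_ isT isT).
rewrite [X in _ <= X]convRE /= !powRKV // => convex_root.
rewrite -[leLHS](@powRVK _ p) //; last first.
  by rewrite addr_ge0 // mulr_ge0 ?powR_ge0 ?subr_ge0.
exact: ler_powRl (ltW p_gt0) (powR_ge0 _ _) convex_root.
Qed.

End powR_sub1.

Section pconvex_combinations.
Context {R : realType} {p : R} {n : nat}.
Hypothesis p_gt0 : 0 < p.
Local Notation V := 'rV[R]_n.
Context {B : set V}.
Hypotheses (B_pconvex : pconvex p B) (B0 : B 0).

Let p_neq0 : p != 0. Proof. exact: lt0r_neq0. Qed.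

Lemma pconvex_scale (t : R) (y : V) : B y -> 0 <= t <= 1 -> B (t *: y).
Proof.
move=> By /andP[t0 t1].
have tp1 : 0 <= 1 - t `^ p by rewrite subr_ge0 powR_le1.
have := B_pconvex y 0 t ((1 - t `^ p) `^ p^-1) By B0 t0 (powR_ge0 _ _).
by rewrite powRVK // addrC subrK scaler0 addr0; apply.
Qed.

Lemma pconvex_subcomb (x y : V) (l m : R) : B x -> B y -> 0 <= l -> 0 <= m ->
  l `^ p + m `^ p <= 1 -> B (l *: x + m *: y).
Proof.
move=> Bx By l0 m0 lm1; set T := l `^ p + m `^ p in lm1.
have [T0|Tn0] := eqVneq T 0.
  have [l_eq0 m_eq0] : l = 0 /\ m = 0.
    move/eqP: T0; rewrite paddr_eq0 ?powR_ge0 //.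
    by case/andP=> /eqP/powR_eq0_eq0 -> /eqP/powR_eq0_eq0 ->.
  by rewrite l_eq0 m_eq0 !scale0r addr0.
have T_gt0 : 0 < T by rewrite lt0r Tn0 addr_ge0 ?powR_ge0.
set r := T `^ p^-1; have r_gt0 : 0 < r by apply: powR_gt0.
have rp : r `^ p = T by apply: powRVK; rewrite ?ltW.
have r1 : r <= 1 by rewrite -(powR_le1 p_gt0) ?rp // ltW.
have Bnormalized : B ((l / r) *: x + (m / r) *: y).
  apply: B_pconvex; rewrite ?divr_ge0 ?(ltW r_gt0) //.
  by rewrite !powR_div ?rp -?mulrDl ?mulfV.
have := @pconvex_scale r _ Bnormalized; rewrite (ltW r_gt0) r1 => /(_ isT).
by rewrite scalerDr !scalerA ![r * _]mulrC !divfK ?lt0r_neq0.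
Qed.

Lemma pconvex_psum k (a : 'I_k -> V) (w : 'I_k -> R) :
  (forall i, B (a i)) -> (forall i, 0 <= w i) -> \sum_i w i `^ p <= 1 ->
  B (\sum_i w i *: a i).
Proof.
elim: k a w => [|k IH] a w Ba w0; first by rewrite !big_ord0.
rewrite !big_ord_recr /=.
set a' := fun i : 'I_k => a (widen_ord (leqnSn k) i).
set w' := fun i : 'I_k => w (widen_ord (leqnSn k) i).
rewrite -/(\sum_(i < k) w' i `^ p) -/(\sum_(i < k) w' i *: a' i).
set s := \sum_(i < k) w' i `^ p => sw1.
have w'0 i : 0 <= w' i by apply: w0.
have s0 : 0 <= s by apply: sumr_ge0 => i _; apply: powR_ge0.
set L := s `^ p^-1; have Lp : L `^ p = s by apply: powRVK.
have [x Bx ->] : exists2 x, B x & \sum_i w' i *: a' i = L *: x.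
  have [s_eq0|sn0] := eqVneq s 0.
    exists 0; rewrite // scaler0 big1 // => i _.
    have /powR_eq0_eq0 -> : w' i `^ p = 0.
      by apply: (psumr_eq0P (fun i _ => powR_ge0 (w' i) p) s_eq0).
    by rewrite scale0r.
  have L_gt0 : 0 < L by rewrite powR_gt0 // lt0r sn0.
  exists (\sum_i (w' i / L) *: a' i).
    apply: IH => [i|i|]; first exact: Ba.
      exact: divr_ge0 (w'0 i) (ltW L_gt0).
    under eq_bigr => i _ do rewrite powR_div ?(ltW L_gt0) //.
    by rewrite -mulr_suml Lp mulfV.
  rewrite scaler_sumr; apply: eq_bigr => i _.
  by rewrite scalerA mulrC divfK ?lt0r_neq0.
by apply: pconvex_subcomb; rewrite ?powR_ge0 ?Lp.
Qed.

End pconvex_combinations.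

Definition subpcomb {R : realType} {n : nat} (p : R) {I : finType}
    (pt : I -> 'rV[R]_n) : set 'rV[R]_n :=
  [set x | exists w : I -> R, [/\ forall i, 0 <= w i,
    \sum_i w i `^ p <= 1 & x = \sum_i w i *: pt i]].

Section subpcomb.
Context {R : realType} {p : R} {n : nat}.
Hypotheses (p_gt0 : 0 < p) (p_lt1 : p < 1).
Local Notation V := 'rV[R]_n.

Lemma pconvex_subpcomb (I : finType) (pt : I -> V) : pconvex p (subpcomb p pt).
Proof.
move=> _ _ a b [w [w0 w1 ->]] [w' [w'0 w'1 ->]] a0 b0 ab1.
exists (fun i => a * w i + b * w' i); split.
- by move=> i; rewrite addr_ge0 // mulr_ge0.
- apply: le_trans (_ : a `^ p * 1 + b `^ p * 1 <= 1); last by rewrite !mulr1 ab1.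
  apply: le_trans (_ : a `^ p * \sum_i w i `^ p + b `^ p * \sum_i w' i `^ p <= _).
    rewrite !mulr_sumr -big_split /=; apply: ler_sum => i _.
    exact: powR_comb.
  by apply: lerD; apply: ler_wpM2l; rewrite ?powR_ge0.
- rewrite !scaler_sumr -big_split /=; apply: eq_bigr => i _.
  by rewrite scalerDl !scalerA.
Qed.

Lemma subpcomb_pt (I : finType) (pt : I -> V) i : subpcomb p pt (pt i).
Proof.
exists (fun j => (j == i)%:R); split.
- by move=> j; rewrite ler0n.
- rewrite (bigD1 i) //= eqxx powR1 big1 ?addr0 // => j /negbTE ->.
  exact: powR0p.
- rewrite (bigD1 i) //= eqxx scale1r big1 ?addr0 // => j /negbTE ->.
  exact: scale0r.
Qed.

Lemma subpcomb0 (I : finType) (pt : I -> V) : subpcomb p pt 0.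
Proof.
exists (fun=> 0); split => //.
- by rewrite big1 // => i _; apply: powR0p.
- by rewrite big1 // => i _; rewrite scale0r.
Qed.

Lemma subpcomb_sub_pconv k (pt : 'I_k -> V) :
  subpcomb p pt `<=` pconv p [set x | (exists i, x = pt i) \/ x = 0].
Proof.
move=> _ [w [w0 w1 ->]] B B_pconvex genB.
have B0 : B 0 by apply: genB; right.
apply: (pconvex_psum p_gt0 B_pconvex B0) => // i.
by apply: genB; left; exists i.
Qed.

Lemma subpcomb_skip (I : finType) (pt : option I -> V) (w : option I -> R) k :
  (forall o, 0 <= w o) -> \sum_o w o `^ p <= 1 -> w k = 0 ->
  subpcomb p (pt \o skip k) (\sum_o w o *: pt o).
Proof.
move=> w0 w1 wk0; exists (w \o skip k); split => [i||] /=.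
- exact: w0.
- by move: w1; rewrite (big_skip (fun o => w o `^ p) k) ?wk0 ?powR0p.
- by rewrite (big_skip _ k) ?wk0 ?scale0r.
Qed.

End subpcomb.

Section boundary_point.
Context {R : realType} {I : finType}.
Implicit Types (w d : I -> R).

Lemma nonneg_ray_exit w d i0 : (forall i, 0 <= w i) -> d i0 < 0 ->
  exists t, [/\ 0 <= t, forall i, 0 <= w i + t * d i
              & exists k, w k + t * d k = 0].
Proof.
move=> w0 di0.
have [k dk k_min] := arg_minP (fun i => w i / - d i) (P := fun i => d i < 0) di0.
have Ndk : 0 < - d k by rewrite oppr_gt0.
exists (w k / - d k); split.
- by rewrite divr_ge0 ?(ltW Ndk).
- move=> i; have [di|di] := ltP (d i) 0; last first.
    by apply: addr_ge0 (w0 i) (mulr_ge0 (divr_ge0 (w0 k) (ltW Ndk)) di).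
  have := k_min i di; rewrite ler_pdivlMr ?oppr_gt0 // => le_wi.
  by rewrite -[d i]opprK mulrN subr_ge0.
- by exists k; rewrite divrN mulNr divfK ?ltr0_neq0 // subrr.
Qed.

Context {p : R}.
Hypotheses (p_gt0 : 0 < p) (p_lt1 : p < 1).

Lemma psum_concave_endpoint w d a b : a <= 0 <= b ->
    (forall i, 0 <= w i + a * d i) -> (forall i, 0 <= w i + b * d i) ->
  \sum_i (w i + a * d i) `^ p <= \sum_i w i `^ p \/
  \sum_i (w i + b * d i) `^ p <= \sum_i w i `^ p.
Proof.
case/andP=> a0 b0 wa wb; have [a_eq0|an0] := eqVneq a 0.
  by left; rewrite a_eq0; under eq_bigr do rewrite mul0r addr0.
have a_lt0 : a < 0 by rewrite lt_neqAle an0 a0.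
have ba_gt0 : 0 < b - a by rewrite subr_gt0 (lt_le_trans a_lt0 b0).
set th := b / (b - a).
have th01 : 0 <= th <= 1.
  by rewrite divr_ge0 ?(ltW ba_gt0) //= ler_pdivrMr // mul1r lerDl oppr_ge0.
have th_mid : th * a + (1 - th) * b = 0 by rewrite /th; field; rewrite lt0r_neq0.
have w_mid i : w i = th * (w i + a * d i) + (1 - th) * (w i + b * d i).
  by rewrite -[LHS]addr0 -(mul0r (d i)) -th_mid; ring.
set Ga := \sum_i (w i + a * d i) `^ p; set Gb := \sum_i (w i + b * d i) `^ p.
have G_concave : th * Ga + (1 - th) * Gb <= \sum_i w i `^ p.
  rewrite !mulr_sumr -big_split; apply: ler_sum => i _.
  by rewrite [w i in leRHS]w_mid; apply: powR_concave.
case/andP: th01 => th0 th1.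
by have [GaGb|GbGa] := leP Ga Gb; [left|right]; apply: le_trans G_concave; nra.
Qed.

Lemma psum_le_at_boundary w d i0 : (forall i, 0 <= w i) -> d i0 < 0 ->
  exists t, [/\ forall i, 0 <= w i + t * d i, exists k, w k + t * d k = 0
              & \sum_i (w i + t * d i) `^ p <= \sum_i w i `^ p].
Proof.
move=> w0 di0; have [b [b0 wb b_exit]] := nonneg_ray_exit _ _ _ w0 di0.
have [/existsP[j dj]|/existsPn d_le0] := boolP [exists j, 0 < d j].
  have Ndj : - d j < 0 by rewrite oppr_lt0.
  have [a [a0 wa a_exit]] := nonneg_ray_exit w (fun i => - d i) _ w0 Ndj.
  have wNa i : 0 <= w i + - a * d i by rewrite mulNr -mulrN.
  have Nab : - a <= 0 <= b by rewrite oppr_le0 a0.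
  have [Ga_le|Gb_le] := psum_concave_endpoint w d (- a) b Nab wNa wb.
  - exists (- a); split => //.
    by case: a_exit => k; exists k; rewrite mulNr -mulrN.
  - by exists b.
exists b; split => //; apply: ler_sum => i _.
apply: ler_powRl; rewrite ?(ltW p_gt0) // gerDl mulr_ge0_le0 //.
by rewrite leNgt d_le0.
Qed.

End boundary_point.

Lemma free_rV_coord {F : fieldType} {n} {P : 'I_n -> 'rV[F]_n} (v : 'rV[F]_n) :
  free [tuple P i | i < n] -> exists c : 'I_n -> F, v = \sum_i c i *: P i.
Proof.
move=> freeP; set X := [tuple P i | i < n].
have spanX : <<X>>%VS = fullv.
  apply/eqP; rewrite eqEdim subvf dimvf /= (eqP freeP) size_tuple.
  by rewrite [dim _]/dim /= mul1n.
have vX : v \in <<X>>%VS by rewrite spanX memvf.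
have ev := coord_span vX.
exists (coord X ^~ v); rewrite [LHS]ev; apply: eq_bigr => i _.
by rewrite -tnth_nth tnth_mktuple.
Qed.

Theorem lemma4 (R : realType) (n : nat) (p : R) (P : 'I_n -> 'rV[R]_n)
    (Q M : 'rV[R]_n) :
  0 < p < 1 ->
  free [tuple P i | i < n] ->
  pconv p [set x | (exists i, x = P i) \/ x = Q \/ x = 0] M ->
  exists f : 'I_n -> option 'I_n,
    injective f /\
    pconv p [set x | (exists i, x = (if f i is Some j then P j else Q)) \/ x = 0] M.
Proof.
move=> /andP[p_gt0 p_lt1] freeP hM; pose pt := oapp P Q.
have [w [w0 w1 ->]] : subpcomb p pt M.
  apply: hM => [|_ [[i ->]|[->|->]]].
  - exact: pconvex_subpcomb.
  - exact: subpcomb_pt p_gt0 _ pt (Some i).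
  - exact: subpcomb_pt p_gt0 _ pt None.
  - exact: subpcomb0.
have [c eQ] := free_rV_coord Q freeP.
pose d o := if o is Some i then c i else -1.
have d_null : \sum_o d o *: pt o = 0 by rewrite big_option /= -eQ scaleN1r addNr.
have [t [wt0 [k wtk0] wt1]] :=
  psum_le_at_boundary p_gt0 p_lt1 w d None w0 (ltrN10 R).
exists (skip k); split; first exact: skip_inj.
have -> : \sum_o w o *: pt o = \sum_o (w o + t * d o) *: pt o.
  under [RHS]eq_bigr do rewrite scalerDl -scalerA.
  by rewrite big_split /= -scaler_sumr d_null scaler0 addr0.
apply: (subpcomb_sub_pconv p_gt0); apply: subpcomb_skip => //.
exact: le_trans wt1 w1.
Qed.
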